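(* For every $d\in\mathbb{Z}^+$, every 1-aware population protocol computing the predicate $R\colon\mathbb{Z}^+\to\{0,1\}$, $R(n)=\mathbb{I}\{n\ge d\}$ (i.e. $R(n)=1$ if $n\ge d$ and $R(n)=0$ otherwise), has at least $\log_2 d+1$ states.
   Context: A population protocol is a tuple $\Pi=\langle Q,Q_0,Q_1,q_{init},\delta\rangle$ where $Q$ is a finite set of states, $Q=Q_0\sqcup Q_1$ (disjoint union), $q_{init}\in Q$ is the initial state, and $\delta\colon Q^2\to 2^{Q^2}\setminus\{\varnothing\}$ is the transition function. For $n\in\mathbb{Z}^+$, an $n$-size configuration is a function $C\colon[n]\to Q$, where $[n]=\{1,\dots,n\}$; the initial configuration $I_n$ maps every element to $q_{init}$. A pair $(C_1,C_2)$ of $n$-size configurations is a transition if there are distinct $i,j\in[n]$ with $(C_2(i),C_2(j))\in\delta(C_1(i),C_1(j))$ and $C_2(k)=C_1(k)$ for all $k\ne i,j$ (the pair $(i,j)$ is ordered). $D$ is reachable from $C$ if there is a finite sequence $C=C_1,\dots,C_k=D$ ($k\ge1$) of configurations with each $(C_i,C_{i+1})$ a transition. An execution is an infinite sequence $(C_i)_{i\ge1}$ with $C_1=I_n$ for some $n$ and each $(C_i,C_{i+1})$ a transition; it is fair if whenever a configuration $C$ occurs infinitely often in it and $D$ is reachable from $C$, then $D$ also occurs infinitely often. $\Pi$ is a 1-aware population protocol computing $R\colon\mathbb{Z}^+\to\{0,1\}$ if for every $n\in\mathbb{Z}^+$: if $R(n)=0$ then every configuration $C$ reachable from $I_n$ satisfies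 $C([n])\subseteq Q_0$; and if $R(n)=1$ then for every fair execution $(C_i)_{i\ge1}$ with $C_1=I_n$ there is $i_0$ such that $C_i([n])\subseteq Q_1$ for all $i\ge i_0$. The number of states of $\Pi$ is $|Q|$. *)

From mathcomp Require Import all_boot.
From Stdlib Require Import Reals.
Set Implicit Arguments. Unset Strict Implicit. Unset Printing Implicit Defensive.

(* Q = Q0 ⊔ Q1 is encoded by the boolean predicate [pp_out1] (Q1 = states with
   pp_out1 q = true, Q0 = the rest), which is exactly a disjoint partition. *)
Record protocol (Q : finType) := Protocol {
  pp_out1 : pred Q;
  pp_init : Q;
  pp_delta : Q -> Q -> {set Q * Q};
  pp_delta_ne : forall p q, pp_delta p q != set0
}.

Definition config (Q : finType) (n : nat) := 'I_n -> Q.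

Definition init_config (Q : finType) (P : protocol Q) (n : nat) : config Q n :=
  fun _ => pp_init P.

Definition transition (Q : finType) (P : protocol Q) (n : nat)
  (C1 C2 : config Q n) : Prop :=
  exists i j : 'I_n, i <> j /\
    (C2 i, C2 j) \in pp_delta P (C1 i) (C1 j) /\
    (forall k, k <> i -> k <> j -> C2 k = C1 k).

Inductive reachable (Q : finType) (P : protocol Q) (n : nat)
  : config Q n -> config Q n -> Prop :=
| reach_refl C : reachable P C C
| reach_step C1 C2 C3 : transition P C1 C2 -> reachable P C2 C3 ->
    reachable P C1 C3.

Definition conf_eq (Q : finType) (n : nat) (C D : config Q n) : Prop :=
  forall k, C k = D k.

Definition occurs_inf_often (Q : finType) (n : nat)
  (E : nat -> config Q n) (C : config Q n) : Prop :=
  forall m, exists i, m <= i /\ conf_eq (E i) C.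

Definition execution (Q : finType) (P : protocol Q) (n : nat)
  (E : nat -> config Q n) : Prop :=
  conf_eq (E 0) (@init_config Q P n) /\ forall i, transition P (E i) (E i.+1).

Definition fair (Q : finType) (P : protocol Q) (n : nat)
  (E : nat -> config Q n) : Prop :=
  forall C D, occurs_inf_often E C -> reachable P C D -> occurs_inf_often E D.

Definition all_in (Q : finType) (n : nat) (C : config Q n) (S : pred Q) : Prop :=
  forall k, S (C k).

Definition one_aware_computes (Q : finType) (P : protocol Q)
  (R : nat -> bool) : Prop :=
  forall n, 0 < n ->
    (R n = false -> forall C, reachable P (@init_config Q P n) C ->
        all_in C (predC (pp_out1 P))) /\
    (R n = true -> forall E : nat -> config Q n, execution P E -> fair P E ->
        exists i0, forall i, i0 <= i -> all_in (E i) (pp_out1 P)).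

(* Let T_0 = {q_init} and let T_(i+1) add to T_i every state produced by a transition
   between two states of T_i (these are the sets [coverable i]).  Splitting a population into two halves shows that every
   state of T_i occurs in a configuration reachable from I_n as soon as n >= 2^i; since
   R(n) = 0 for n < d, an output-1 state lies in T_i only if d <= 2^i.  The chain T_i
   increases in the finite set Q, so K = |Q| - 1 gives a set T_K closed under
   transitions, and executions from I_n never leave T_K.  For n = max(d, 2) there is a
   fair execution (walk into a bottom strongly connected component of the configuration
   graph, then cycle through all of it forever), which must end in output-1 states of
   T_K.  Hence d <= 2^(|Q|-1). *)

From mathcomp Require Import all_boot.
From Stdlib Require Import Reals Lra.
(* Reals rebinds [_ ^ _] on nat to [Nat.pow]; restore ssrnat's [expn]. *)
Import ssrnat.
Set Implicit Arguments. Unset Strict Implicit. Unset Printing Implicit Defensive.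

Section FairRun.
Variables (T : finType) (e : rel T).

Definition infinitely_often (r : nat -> T) (y : T) : Prop :=
  forall m, exists2 i, m <= i & r i = y.

Lemma exists_bottom x0 :
  exists2 b, connect e x0 b & forall y, connect e b y -> connect e y b.
Proof.
case: (arg_minnP (fun y => #|connect e y|) (connect0 e x0)) => b x0b b_min.
exists b => // y b_y; apply/contraT => yNb.
have : #|connect e y| < #|connect e b|.
  apply: proper_card; apply/properP; split.
    by apply/subsetP => z; apply: connect_trans.
  by exists b; rewrite ?inE ?connect0.
by rewrite ltnNge b_min //; apply: connect_trans b_y.
Qed.

Section Lasso.
Variables (x0 b : T) (p w : seq T).
Hypotheses (p_path : path e x0 p) (p_last : last x0 p = b).
Hypotheses (w_path : path e b w) (w_last : last b w = b) (w_gt0 : 0 < size w).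

(* [w] is a closed walk at [b], so [b :: w] starts and ends with [b]. *)
Definition loop j := nth b (b :: w) (j %% size w).

Definition lasso i := if i < size p then nth x0 (x0 :: p) i else loop (i - size p).

Lemma nth_closed_walk a : a < size w -> nth b w a = loop a.+1.
Proof.
rewrite /loop => a_lt; case: (ltngtP a.+1 (size w)) => [lt | gt | eq].
- by rewrite modn_small.
- by rewrite ltnNge a_lt in gt.
- by rewrite eq modnn -[a]/(a.+1.-1) eq nth_last.
Qed.

Lemma loop_step j : e (loop j) (loop j.+1).
Proof.
have j_lt : j %% size w < size w := ltn_pmod j w_gt0.
have -> : loop j.+1 = nth b w (j %% size w).
  by rewrite nth_closed_walk // /loop -[(j %% _).+1]addn1 modnDml addn1.
by move/(pathP b): w_path => /(_ _ j_lt).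
Qed.

Lemma loop_mem j : loop j \in b :: w.
Proof. by rewrite mem_nth //= ltnS ltnW // ltn_pmod. Qed.

Lemma loopMD m j : loop (m * size w + j) = loop j.
Proof. by rewrite /loop modnMDl. Qed.

Lemma loop_visits y : y \in b :: w -> infinitely_often loop y.
Proof.
have le_mul m : m <= m * size w by rewrite leq_pmulr.
rewrite inE => /predU1P [-> | yw] m.
  by exists (m * size w + 0); [rewrite addn0 | rewrite loopMD /loop mod0n].
exists (m * size w + (index y w).+1); first exact: leq_trans (le_mul m) (leq_addr _ _).
by rewrite loopMD -nth_closed_walk ?index_mem ?nth_index.
Qed.

Lemma lasso_prefix i : i <= size p -> lasso i = nth x0 (x0 :: p) i.
Proof.
rewrite /lasso leq_eqVlt => /predU1P [-> | -> //].
by rewrite ltnn subnn /loop mod0n -last_nth p_last.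
Qed.

Lemma lasso_loop j : lasso (size p + j) = loop j.
Proof. by rewrite /lasso ltnNge leq_addr /= addKn. Qed.

Lemma lasso_step i : e (lasso i) (lasso i.+1).
Proof.
case: (ltnP i (size p)) => [lt | ge].
  by rewrite !lasso_prefix ?(ltnW lt) //; move/(pathP x0): p_path => /(_ _ lt).
by rewrite -(subnKC ge) -addnS !lasso_loop; apply: loop_step.
Qed.

Lemma lasso_fair : {subset connect e b <= b :: w} ->
  forall y z, infinitely_often lasso y -> connect e y z -> infinitely_often lasso z.
Proof.
move=> w_covers y z y_inf yz m.
have [i ge yi] := y_inf (size p).
rewrite -yi -(subnKC ge) lasso_loop in yz.
have bz : connect e b z := connect_trans (path_connect w_path (loop_mem _)) yz.
have [k mk <-] := loop_visits (w_covers z bz) m.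
by exists (size p + k); [exact: leq_trans mk (leq_addl _ _) | rewrite lasso_loop].
Qed.

End Lasso.

Hypothesis e_serial : forall x, exists y, e x y.

Lemma exists_covering_closed_walk b : (forall y, connect e b y -> connect e y b) ->
  exists w, [/\ path e b w, last b w = b, 0 < size w & {subset connect e b <= b :: w}].
Proof.
move=> b_bottom.
suff [w [wp wl w_gt0 ws]] : exists w, [/\ path e b w, last b w = b, 0 < size w
    & {subset enum (connect e b) <= b :: w}].
  by exists w; split=> // y b_y; apply: ws; rewrite mem_enum.
have : {subset enum (connect e b) <= connect e b} by move=> y; rewrite mem_enum.
elim: (enum _) => [_ | y s IHs sub].
  have [y eby] := e_serial b.
  have /connectP [p yp yl] := b_bottom y (connect1 eby).
  by exists (y :: p); split; rewrite //= ?eby // -yl.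
have [w [wp wl w_gt0 ws]] := IHs (fun z zs => sub z (@mem_behead _ (y :: s) z zs)).
have /connectP [p1 p1_path y1] := sub y (mem_head y s).
have /connectP [p2 p2_path y2] := b_bottom y (sub y (mem_head y s)).
exists (p1 ++ p2 ++ w); split.
- by rewrite !cat_path -y1 -y2 p1_path p2_path wp.
- by rewrite !last_cat -y1 -y2.
- by rewrite !size_cat !addn_gt0 w_gt0 !orbT.
- move=> z; rewrite inE => /predU1P [-> | /ws].
    by rewrite y1 -cat_cons mem_cat mem_last.
  by rewrite !inE !mem_cat => /predU1P [-> | ->]; rewrite ?eqxx ?orbT.
Qed.

Theorem exists_fair_run x0 : exists r : nat -> T,
  [/\ r 0 = x0, forall i, e (r i) (r i.+1) &
      forall y z, infinitely_often r y -> connect e y z -> infinitely_often r z].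
Proof.
have [b /connectP [p p_path /esym p_last] b_bottom] := exists_bottom x0.
have [w [w_path w_last w_gt0 w_covers]] := exists_covering_closed_walk b_bottom.
exists (lasso x0 b p w); split.
- by rewrite lasso_prefix.
- exact: lasso_step.
- exact: lasso_fair.
Qed.

End FairRun.

Lemma exists_subset_card (T : finType) (A : {set T}) k :
  k <= #|A| -> exists2 B : {set T}, B \subset A & #|B| = k.
Proof.
move=> k_le; exists [set x in take k (enum A)].
  by apply/subsetP => x; rewrite inE => /mem_take; rewrite mem_enum.
by rewrite cardsE (card_uniqP _) ?take_uniq ?enum_uniq // size_takel // -cardE.
Qed.

Lemma iter_extensive_fixpoint (T : finType) (F : {set T} -> {set T}) (A : {set T}) :
  (forall S : {set T}, S \subset F S) -> 0 < #|A| -> F (iter #|T|.-1 F A) = iter #|T|.-1 F A.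
Proof.
move=> F_ext A_gt0.
have fix_or_large k : F (iter k F A) = iter k F A \/ k < #|iter k F A|.
  elim: k => [|k IH]; first by right.
  have [fixed | grows] := eqVneq (F (iter k F A)) (iter k F A).
    by left; rewrite /= fixed fixed.
  right; case: IH => [fixed | lt]; first by rewrite fixed eqxx in grows.
  apply: leq_ltn_trans lt (proper_card _).
  by rewrite properEneq eq_sym grows F_ext.
have [// | large] := fix_or_large #|T|.-1.
have full : iter #|T|.-1 F A = setT.
  by apply/eqP; rewrite eqEcard subsetT cardsT (leq_trans (leqSpred _) large).
by rewrite full; apply/eqP; rewrite eqEsubset subsetT F_ext.
Qed.

Section Protocol.
Variables (Q : finType) (P : protocol Q).

Lemma reachable_trans n (C D E : config Q n) :
  reachable P C D -> reachable P D E -> reachable P C E.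
Proof. by elim=> // C1 C2 C3 t _ IH /IH; apply: reach_step. Qed.

Lemma reachable1 n (C D : config Q n) : transition P C D -> reachable P C D.
Proof. by move=> t; apply: reach_step t (reach_refl _ _). Qed.

Lemma reachable_run n (E : nat -> config Q n) i :
  (forall i, transition P (E i) (E i.+1)) -> reachable P (E 0) (E i).
Proof.
move=> E_step; elim: i => [|i IH]; first exact: reach_refl.
exact: reachable_trans IH (reachable1 (E_step i)).
Qed.

Definition update n (C : config Q n) (a b : 'I_n) (u v : Q) : config Q n :=
  fun k => if k == a then u else if k == b then v else C k.

Lemma transition_update n (C : config Q n) a b u v : a != b ->
  (u, v) \in pp_delta P (C a) (C b) -> transition P C (update C a b u v).
Proof.
move=> ab uv; exists a, b; split; first exact/eqP.
rewrite /update eqxx eq_sym (negbTE ab) eqxx; split=> // k /eqP ka /eqP kb.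
by rewrite (negbTE ka) (negbTE kb).
Qed.

Definition produced (S : {set Q}) : {set Q} :=
  [set x | [exists p in S, exists p' in S, exists y,
     ((x, y) \in pp_delta P p p') || ((y, x) \in pp_delta P p p')]].

Lemma produced_delta (S : {set Q}) p p' u v : p \in S -> p' \in S ->
  (u, v) \in pp_delta P p p' -> u \in produced S /\ v \in produced S.
Proof.
move=> pS p'S uv; split; rewrite inE; apply/exists_inP; exists p => //;
  apply/exists_inP; exists p' => //; apply/existsP; [exists v | exists u];
  by rewrite uv ?orbT.
Qed.

Definition coverable i : {set Q} :=
  iter i (fun S => S :|: produced S) [set pp_init P].

Definition covers n (A : {set 'I_n}) (C : config Q n) (q : Q) : Prop :=
  exists D, [/\ reachable P C D, {in ~: A, D =1 C} & exists2 a, a \in A & D a = q].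

Lemma covers_interact n (A B : {set 'I_n}) (C : config Q n) p p' x y :
  B \subset A -> covers B C p ->
  (forall C1, {in ~: B, C1 =1 C} -> covers (A :\: B) C1 p') ->
  (x, y) \in pp_delta P p p' -> covers A C x /\ covers A C y.
Proof.
move=> sBA [C1 [CC1 C1_frame [a aB C1a]]] cover2 xy.
have [C2 [C1C2 C2_frame [b bAB C2b]]] := cover2 C1 C1_frame.
have /setDP [bA bNB] := bAB.
have aA : a \in A by apply: (subsetP sBA).
have ab : a != b by apply: contraNneq bNB => <-.
have C2a : C2 a = p by rewrite (C2_frame a) // !inE aB.
set D := update C2 a b x y.
have CD : reachable P C D.
  apply: reachable_trans CC1 (reachable_trans C1C2 (reachable1 _)).
  by apply: transition_update; rewrite // C2a C2b.
have D_frame : {in ~: A, D =1 C}.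
  move=> k; rewrite in_setC => kA.
  have kB : k \notin B by apply: contra kA; apply: (subsetP sBA).
  have [ka kb] : k != a /\ k != b by split; apply: contraNneq kA => ->.
  have kNAB : k \in ~: (A :\: B) by rewrite !inE (negbTE kA) andbF.
  have kNB : k \in ~: B by rewrite in_setC.
  by rewrite /D /update (negbTE ka) (negbTE kb) (C2_frame k kNAB) (C1_frame k kNB).
split; exists D; split=> //.
  by exists a; rewrite // /D /update eqxx.
by exists b; rewrite // /D /update eq_sym (negbTE ab) eqxx.
Qed.

Lemma coverable_covers i n (A : {set 'I_n}) (C : config Q n) q :
  q \in coverable i -> 2 ^ i <= #|A| -> {in A, forall a, C a = pp_init P} ->
  covers A C q.
Proof.
elim: i A C q => [|i IH] A C q.
  rewrite /coverable /= in_set1 expn0 => /eqP -> /card_gt0P [a aA] C_init.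
  by exists C; split=> //; [apply: reach_refl | exists a => //; apply: C_init].
rewrite /coverable iterS -/(coverable i) in_setU.
case/orP => [q_cov | q_prod] A_ge C_init.
  by apply: IH => //; apply: leq_trans A_ge; rewrite leq_exp2l.
move: q_prod; rewrite inE => /exists_inP [p pS /exists_inP [p' p'S /existsP [y xy]]].
have [B sBA cardB] : exists2 B : {set 'I_n}, B \subset A & #|B| = 2 ^ i.
  by apply: exists_subset_card; apply: leq_trans A_ge; rewrite leq_exp2l.
have AB_ge : 2 ^ i <= #|A :\: B|.
  rewrite cardsD (setIidPr sBA) cardB leq_subRL; first by rewrite addnn -mul2n -expnS.
  by rewrite -cardB subset_leq_card.
have cover1 : covers B C p.
  by apply: IH; rewrite ?cardB // => b /(subsetP sBA) /C_init.
have cover2 C1 : {in ~: B, C1 =1 C} -> covers (A :\: B) C1 p'.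
  move=> C1_frame; apply: IH => // k; rewrite inE => /andP [kB kA].
  by rewrite (C1_frame k) ?inE // C_init.
by case/orP: xy => /(covers_interact sBA cover1 cover2) [].
Qed.

Lemma coverable_out1_true (R : nat -> bool) i q : one_aware_computes P R ->
  q \in coverable i -> pp_out1 P q -> R (2 ^ i).
Proof.
move=> computes q_cov q_out1; case R_i: (R (2 ^ i)) => //.
have [D [ID _ [a _ Da]]] : covers setT (@init_config Q P (2 ^ i)) q.
  by apply: coverable_covers q_cov _ _; rewrite ?cardsT ?card_ord.
have /= := (computes _ (expn_gt0 2 i)).1 R_i D ID a.
by rewrite Da q_out1.
Qed.

Lemma init_coverable i : pp_init P \in coverable i.
Proof. by elim: i => [|i IH]; rewrite /coverable /= ?set11 // in_setU IH. Qed.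

Lemma coverable_closed : produced (coverable #|Q|.-1) \subset coverable #|Q|.-1.
Proof.
apply/setUidPl; apply: iter_extensive_fixpoint => [S|]; first exact: subsetUl.
by rewrite cards1.
Qed.

Lemma reachable_closed (S : {set Q}) n (C D : config Q n) :
  produced S \subset S -> reachable P C D ->
  (forall k, C k \in S) -> forall k, D k \in S.
Proof.
move=> S_closed; elim=> [// | C1 C2 C3 [i [j [_ [delta_ij frame]]]] _ IH] C1S.
have [/(subsetP S_closed) C2i /(subsetP S_closed) C2j] :=
  produced_delta (C1S i) (C1S j) delta_ij.
apply: IH => k; case: (eqVneq k i) => [-> // | /eqP ki].
by case: (eqVneq k j) => [-> // | /eqP kj]; rewrite frame.
Qed.

Definition transb n (C D : config Q n) : bool :=
  [exists i, exists j, [&& i != j, (D i, D j) \in pp_delta P (C i) (C j)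
     & [forall k, (k != i) ==> (k != j) ==> (D k == C k)]]].

Lemma transitionP n (C D : config Q n) : reflect (transition P C D) (transb C D).
Proof.
apply: (iffP existsP) => [[i /existsP [j /and3P [ij delta_ij /forallP frame]]]
                        | [i [j [ij [delta_ij frame]]]]].
  exists i, j; split; first exact/eqP.
  by split=> // k /eqP ki /eqP kj; apply/eqP; rewrite (implyP (implyP (frame k) ki) kj).
exists i; apply/existsP; exists j; apply/and3P; split=> //; first exact/eqP.
by apply/forallP => k; apply/implyP => /eqP ki; apply/implyP => /eqP kj; rewrite frame.
Qed.

Lemma transb_finfun n (C D : config Q n) : transb (finfun C) (finfun D) = transb C D.
Proof.
apply: eq_existsb => i; apply: eq_existsb => j; rewrite !ffunE; congr [&& _, _ & _].
by apply: eq_forallb => k; rewrite !ffunE.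
Qed.

Definition ftransition n : rel {ffun 'I_n -> Q} := fun f g => transb f g.

Lemma reachable_connect n (C D : config Q n) :
  reachable P C D -> connect (@ftransition n) (finfun C) (finfun D).
Proof.
elim=> [C0 | C1 C2 C3 /transitionP C12 _ IH]; first exact: connect0.
by apply: connect_trans IH; apply: connect1; rewrite /ftransition transb_finfun.
Qed.

Lemma ftransition_serial n : 1 < n -> forall f, exists g, @ftransition n f g.
Proof.
move=> n_gt1 f; pose a : 'I_n := Ordinal (ltnW n_gt1); pose b : 'I_n := Ordinal n_gt1.
have /set0Pn [[u v] uv] := pp_delta_ne P (f a) (f b).
exists (finfun (update f a b u v)).
by rewrite /ftransition -{1}(ffunK f) transb_finfun; apply/transitionP/transition_update.
Qed.

Lemma exists_fair_execution n : 1 < n -> exists E : nat -> config Q n, execution P E /\ fair P E.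
Proof.
move=> n_gt1.
have [r [r0 r_step r_fair]] := exists_fair_run (ftransition_serial n_gt1) (finfun (@init_config Q P n)).
exists (fun i => r i : config Q n); split; first split.
- by move=> k; rewrite r0 ffunE.
- by move=> i; apply/transitionP; apply: r_step.
move=> C D C_inf CD m.
have C_inf' : infinitely_often r (finfun C).
  move=> m'; have [i [m'i ri]] := C_inf m'.
  by exists i => //; apply/ffunP => k; rewrite ffunE ri.
have [i mi ri] := r_fair _ _ C_inf' (reachable_connect CD) m.
by exists i; split=> // k; rewrite ri ffunE.
Qed.

Lemma closed_set_has_out1 (R : nat -> bool) n (S : {set Q}) : one_aware_computes P R ->
  1 < n -> R n -> pp_init P \in S -> produced S \subset S -> exists2 q, q \in S & pp_out1 P q.
Proof.
move=> computes n_gt1 R_n init_S S_closed.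
have [E [[E0 E_step] E_fair]] := exists_fair_execution n_gt1.
have [i0 E_out1] := (computes n (ltnW n_gt1)).2 R_n E (conj E0 E_step) E_fair.
pose a : 'I_n := Ordinal (ltnW n_gt1).
exists (E i0 a); last exact: E_out1.
by apply: reachable_closed S_closed (reachable_run i0 E_step) _ a => k; rewrite E0.
Qed.

Lemma threshold_le_exp2 d : one_aware_computes P (fun n => d <= n) -> d <= 2 ^ #|Q|.-1.
Proof.
move=> computes.
have [q q_cov q_out1] := closed_set_has_out1 computes (leq_maxr d 2) (leq_maxl d 2)
  (init_coverable _) coverable_closed.
exact: coverable_out1_true computes q_cov q_out1.
Qed.

End Protocol.

Lemma INR_expn2 k : INR (2 ^ k) = (2 ^ k)%R.
Proof. by elim: k => // k IH; rewrite expnS mult_INR IH /=; lra. Qed.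

Lemma log2_le d k : 0 < d -> d <= 2 ^ k -> (ln (INR d) / ln 2 <= INR k)%R.
Proof.
move=> d_gt0 d_le.
have ln2_gt0 : (0 < ln 2)%R by rewrite -ln_1; apply: ln_increasing; lra.
have d_pos : (0 < INR d)%R by apply/lt_0_INR/ltP.
have ln_le : (ln (INR d) <= INR k * ln 2)%R.
  rewrite -ln_pow; last lra.
  have /le_INR : (d <= 2 ^ k)%coq_nat by apply/leP.
  rewrite INR_expn2 => /Rle_lt_or_eq_dec [/(ln_increasing _ _ d_pos) | ->]; lra.
apply: (Rmult_le_reg_r (ln 2)) => //.
by rewrite /Rdiv Rmult_assoc Rinv_l; lra.
Qed.

Theorem theorem2 (d : nat) (hd : 0 < d) (Q : finType) (P : protocol Q) :
  one_aware_computes P (fun n => d <= n) ->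
  (ln (INR d) / ln 2 + 1 <= INR #|Q|)%R.
Proof.
move=> computes.
have Q_gt0 : 0 < #|Q| by apply/card_gt0P; exists (pp_init P).
rewrite -(prednK Q_gt0) S_INR.
have := log2_le hd (threshold_le_exp2 computes); lra.
Qed.
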